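(* Let $x,y\in[-2^l,2^l]$ be integers and let $\llbracket x\rrbracket,\llbracket y\rrbracket$ be FastPai encryptions of $x,y$ held by $S_0$. Run protocol $\mathtt{SCMP}_{\mathrm{HSS}}$: (i) $S_0$ picks integers $r_1\in\{1,\dots,2^\sigma-1\}$ and $r_2$ with $r_2\le N/2$ and $r_1+r_2>N/2$, and a bit $\pi\in\{0,1\}$. If $\pi=0$ it sets $D=(\llbracket x\rrbracket\cdot\llbracket y\rrbracket^{-1}\cdot\llbracket 1\rrbracket)^{r_1}\bmod N^2$, else $D=(\llbracket y\rrbracket\cdot\llbracket x\rrbracket^{-1})^{r_1}\bmod N^2$. It computes $z_0=\mathrm{DDLog}_N(D^{\langle 2\alpha\rangle_0}\bmod N^2)-r_2$ and sends $(D,z_0)$ to $S_1$. (ii) $S_1$ computes $z_1=\mathrm{DDLog}_N(D^{\langle 2\alpha\rangle_1}\bmod N^2)$ and $d=z_1-z_0\bmod N\in[0,N)$; it sets $\llbracket\mu_0\rrbracket=\llbracket 0\rrbracket$ if $d>N/2$ and $\llbracket\mu_0\rrbracket=\llbracket 1\rrbracket$ if $d\le N/2$, and sends $\llbracket\mu_0\rrbracket$ to $S_0$. (iii) If $\pi=0$, $S_0$ sets $\llbracket\mu\rrbracket=\llbracket\mu_0\rrbracket$, else $\llbracket\mu\rrbracket=\llbracket 1\rrbracket\cdot\llbracket\mu_0\rrbracket^{-1}\bmod N^2$; finally it sets $\llbracket\mu\rrbracket\leftarrow\llbracket\mu\rrbracket\cdot\llbracket 0\rrbracket\bmod N^2$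 and outputs it. Then the output $\llbracket\mu\rrbracket$ is an encryption of $0$ if $x\ge y$ and an encryption of $1$ if $x<y$ (i.e. $\mathrm{Dec}(\llbracket\mu\rrbracket)=0$ if $x\ge y$ and $=1$ if $x<y$).
   Context: FastPai: for a security parameter $\kappa$, $l(\kappa)=4\kappa$. $N=PQ$ with $P,Q$ primes of $n(\kappa)/2$ bits, $p,q$ odd primes of $l(\kappa)/2$ bits, $p\mid P-1$, $q\mid Q-1$, $P\equiv Q\equiv3\pmod4$, $\gcd(P-1,Q-1)=2$, $\gcd(pq,(P-1)(Q-1)/(4pq))=1$. Private key $\alpha=pq$ (an $l(\kappa)$-bit number); $\beta=(P-1)(Q-1)/(4pq)$; $h=-y_0^{2\beta}\bmod N$ for random $y_0\in\mathbb{Z}_N^*$; public key $(N,h)$. $\mathrm{Enc}(m)=(1+N)^m(h^r\bmod N)^N\bmod N^2$, $r$ uniform in $\{0,1\}^{l(\kappa)}$, written $\llbracket m\rrbracket$; $\mathrm{Dec}(c)=L(c^{2\alpha}\bmod N^2)(2\alpha)^{-1}\bmod N$, $L(u)=(u-1)/N$. Negative integers $m$ are encoded as $N-|m|$. Ciphertext inverses and exponentiations are in $\mathbb{Z}_{N^2}^*$. $\mathrm{DDLog}_N(g)=\lfloor g/N\rfloor\cdot(g\bmod N)^{-1}\bmod N$ for $g\in[0,N^2)$ with $g\bmod N$ invertible mod $N$. $\langle 2\alpha\rangle_0,\langle 2\alpha\rangle_1$ are integers held by $S_0$, $S_1$ respectively with $\langle 2\alpha\rangle_1-\langle 2\alpha\rangle_0=2\alpha$;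 $\llbracket 0\rrbracket,\llbracket 1\rrbracket$ are encryptions of $0,1$ known to both servers. $\sigma$ is a parameter (e.g. $\sigma=128$). Standing parameter assumption: $N/2>2^{l+1+\sigma+l(\kappa)+1}+2^{\sigma+l(\kappa)+1}$ (the paper's parameters, e.g. $|N|=3072$, $l(\kappa)=512$, $\sigma=128$, $l=32$, satisfy this). *)

From mathcomp Require Import all_boot all_order all_algebra.
Set Implicit Arguments. Unset Strict Implicit. Unset Printing Implicit Defensive.
Import Order.TTheory GRing.Theory Num.Theory.
Local Open Scope ring_scope.

(* modular inverse of [a] modulo [n], as a representative in [0, n)
   (meaningful when gcd(a, n) = 1), via the Bezout coefficient *)
Definition inv_mod (a n : int) : int := modz (egcdz a n).1 n.

Definition pow_mod (g e n : int) : int :=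
  match e with
  | Posz k => modz (g ^+ k) n
  | Negz k => modz (inv_mod g n ^+ k.+1) n
  end.

Definition Lfun (N u : int) : int := divz (u - 1) N.

(* FastPai encryption with randomness r : Enc(m) = (1+N)^m (h^r mod N)^N mod N^2;
   an integer m (possibly negative) is encoded as m mod N (= N - |m| if -N < m < 0). *)
Definition fp_enc (N h m : int) (r : nat) : int :=
  modz (pow_mod (1 + N) (modz m N) (N ^+ 2) * pow_mod (modz (h ^+ r) N) N (N ^+ 2))
       (N ^+ 2).

Definition fp_dec (N alpha c : int) : int :=
  modz (Lfun N (pow_mod c (2 * alpha) (N ^+ 2)) * inv_mod (2 * alpha) N) N.

Definition ddlog (N g : int) : int :=
  modz (divz g N * inv_mod (modz g N) N) N.

(* The protocol SCMP_HSS; returns the output ciphertext [[mu]] of S_0.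
   s0, s1 : the shares <2alpha>_0, <2alpha>_1; c0, c1 : [[0]], [[1]];
   cx, cy : [[x]], [[y]]; r1, r2, pi : the random choices of S_0. *)
Definition scmp_hss (N s0 s1 c0 c1 cx cy r1 r2 : int) (pi : bool) : int :=
  let N2 := N ^+ 2 in
  let D := if ~~ pi then pow_mod (modz (modz (cx * inv_mod cy N2) N2 * c1) N2) r1 N2
           else pow_mod (modz (cy * inv_mod cx N2) N2) r1 N2 in
  let z0 := ddlog N (pow_mod D s0 N2) - r2 in
  let z1 := ddlog N (pow_mod D s1 N2) in
  let d := modz (z1 - z0) N in
  let mu0 := if N < 2 * d then c0 else c1 in
  let mu := if ~~ pi then mu0 else modz (c1 * inv_mod mu0 N2) N2 in
  modz (mu * c0) N2.

From mathcomp Require Import all_boot all_order all_algebra.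
From mathcomp Require Import cyclic zify ring.
Set Implicit Arguments. Unset Strict Implicit. Unset Printing Implicit Defensive.
Import Order.TTheory GRing.Theory Num.Theory.
Local Open Scope ring_scope.

(* Call [c] an [a]-encoding of [m] modulo [N] when [c^a = 1 + a m N (mod N^2)].
   Encodings compose homomorphically under products, inverses and powers; every
   FastPai ciphertext of [m] is a [2 alpha]-encoding of [m], because
   [h^(2 alpha) = y0^phi(N) = 1 (mod N)]; and Dec returns [m mod N] on any such
   encoding.  If [D] encodes [A] and [s1 - s0 = a], then
   [D^s1 = D^s0 (1 + a A N) (mod N^2)], so the DDLog shares of the two servers
   differ by [a A] modulo [N]: S_1 learns [d = 2 alpha r1 v + r2 mod N] with
   [v = x - y + 1] (pi = 0) or [v = y - x] (pi = 1).  The bounds on [r1], [r2]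
   and [N] keep [2 alpha r1 v + r2] inside [0, N), above [N/2] exactly when
   [v > 0]; so [mu0 = 1] iff [v <= 0], and flipping it when pi = 1 gives
   [1] iff [x < y] in both cases. *)

Lemma eqz_modP (a b n : int) : (a = b %[mod n])%Z <-> exists k, a = b + k * n.
Proof.
split; last by move=> [k ->]; rewrite addrC modzMDl.
move/eqP; rewrite eqz_mod_dvd => /dvdzP [k hk]; exists k.
by rewrite -hk addrC subrK.
Qed.

Lemma coprimez_mul_eq1 (c v n : int) : (c * v = 1 %[mod n])%Z -> coprimez c n.
Proof.
move/eqz_modP=> [k hk]; apply/coprimezP; exists (v, -k) => /=.
by rewrite mulrC hk; ring.
Qed.

Lemma mulz_inv_mod (c n : int) : coprimez c n -> (c * inv_mod c n = 1 %[mod n])%Z.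
Proof.
rewrite /inv_mod; case: egcdzP => u v Huv _ /= /eqP Hg.
rewrite modzMmr mulrC; apply/eqz_modP; exists (- v).
by rewrite -Hg -Huv; ring.
Qed.

Lemma pow_mod_add1 (g e n : int) : coprimez g n ->
  (pow_mod g (e + 1) n = pow_mod g e n * g %[mod n])%Z.
Proof.
move=> /mulz_inv_mod gi; case: e => [k|[|k]].
- by rewrite /pow_mod -PoszD addn1 modzMml modz_mod exprSr.
- by rewrite /pow_mod /= modz_mod modzMml expr1 mulrC gi.
have -> : Negz k.+1 + 1 = Negz k by rewrite !NegzE; lia.
rewrite /pow_mod modz_mod modzMml; set i := inv_mod g n.
rewrite [i ^+ k.+2]exprSr -mulrA -modzMmr.
by rewrite [i * g]mulrC gi modzMmr mulr1.
Qed.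

Lemma pow_mod_addn (g e n : int) (k : nat) : coprimez g n ->
  (pow_mod g (e + k%:Z) n = pow_mod g e n * g ^+ k %[mod n])%Z.
Proof.
move=> gn; elim: k => [|k IH]; first by rewrite addr0 expr0 mulr1.
by rewrite exprSr mulrA -addn1 PoszD addrA pow_mod_add1 // -modzMml IH modzMml.
Qed.

Lemma expr_1addM_mod_sq (N t : int) (k : nat) :
  ((1 + t * N) ^+ k = 1 + k%:Z * t * N %[mod N ^+ 2])%Z.
Proof.
elim: k => [|k IH]; first by rewrite expr0 !mul0r addr0.
rewrite exprSr -modzMml IH modzMml; apply/eqz_modP; exists (k%:Z * t * t).
by rewrite -addn1 PoszD; ring.
Qed.

Lemma ddlog_mul_1addM (N g g' k : int) : N != 0 -> coprimez g N ->
  (g' = g * (1 + k * N) %[mod N ^+ 2])%Z -> ddlog N g' = ((ddlog N g + k) %% N)%Z.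
Proof.
move=> N0 gN /eqz_modP[j ->]; set i := inv_mod (g %% N)%Z N.
have /eqz_modP[s gi] : (g * i = 1 %[mod N])%Z.
  by rewrite -modzMml mulz_inv_mod // /coprimez gcdz_modl.
have -> : g * (1 + k * N) + j * N ^+ 2 = (g * k + j * N) * N + g by ring.
rewrite /ddlog modzMDl divzMDl // -/i modzDml; apply/eqz_modP.
exists (k * s + j * i).
transitivity ((g %/ N)%Z * i + k * (g * i) + j * i * N); first ring.
by rewrite gi; ring.
Qed.

Definition encodes (N : int) (a : nat) (c m : int) :=
  (c ^+ a = 1 + a%:Z * m * N %[mod N ^+ 2])%Z.

Section Encodings.

Variables (N : int) (a : nat).
Hypothesis a_gt0 : (0 < a)%N.

Lemma encodes_eq_mod (c c' m m' : int) :
  (c = c' %[mod N ^+ 2])%Z -> (m = m' %[mod N])%Z ->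
  encodes N a c m -> encodes N a c' m'.
Proof.
move=> ec /eqz_modP[k ->]; rewrite /encodes => e.
rewrite -modzXm -ec modzXm e.
by apply/eqz_modP; exists (a%:Z * k); ring.
Qed.

Lemma encodes_modz (c m : int) :
  encodes N a c m -> encodes N a (c %% N ^+ 2)%Z m.
Proof. by apply: encodes_eq_mod; rewrite ?modz_mod. Qed.

Lemma encodesM (c c' m m' : int) :
  encodes N a c m -> encodes N a c' m' -> encodes N a (c * c') (m + m').
Proof.
rewrite /encodes exprMn => e e'.
rewrite -modzMml e modzMml -modzMmr e' modzMmr.
by apply/eqz_modP; exists (a%:Z * m * a%:Z * m'); ring.
Qed.

Lemma encodesX (c m : int) (k : nat) :
  encodes N a c m -> encodes N a (c ^+ k) (k%:Z * m).
Proof.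
rewrite /encodes -exprM mulnC exprM => e.
by rewrite -modzXm e modzXm expr_1addM_mod_sq; congr (_ %% _)%Z; ring.
Qed.

Lemma encodes_coprime (c m : int) : encodes N a c m -> coprimez c N.
Proof.
move=> /eqz_modP[k e]; apply: (@coprimez_mul_eq1 _ (c ^+ a.-1)).
rewrite -exprS prednK // e; apply/eqz_modP.
by exists (a%:Z * m + k * N); ring.
Qed.

Lemma encodes_inv_mod (c m : int) :
  encodes N a c m -> encodes N a (inv_mod c (N ^+ 2)) (- m).
Proof.
move=> e; set i := inv_mod c (N ^+ 2).
have ci : (c * i = 1 %[mod N ^+ 2])%Z.
  by apply: mulz_inv_mod; rewrite coprimez_pexpr // (encodes_coprime e).
have cia : ((c * i) ^+ a = 1 %[mod N ^+ 2])%Z by rewrite -modzXm ci modzXm expr1n.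
(* [c^a (1 - a m N) = 1 - (a m N)^2 = 1], so [i^a = 1 - a m N]. *)
have cam : (c ^+ a * (1 - a%:Z * m * N) = 1 %[mod N ^+ 2])%Z.
  rewrite -modzMml e modzMml; apply/eqz_modP.
  by exists (- (a%:Z * m) ^+ 2); ring.
rewrite /encodes -[i ^+ a]mulr1 -modzMmr -cam modzMmr mulrA -exprMn.
rewrite -modzMml [i * c]mulrC cia modzMml mul1r.
by congr (_ %% _)%Z; ring.
Qed.

Lemma encodes_pow_mod (c m e : int) :
  encodes N a c m -> encodes N a (pow_mod c e (N ^+ 2)) (e * m).
Proof.
case: e => [k|k] cm /=; apply: encodes_modz.
  exact: encodesX.
by rewrite NegzE mulNr -mulrN; apply/encodesX/encodes_inv_mod.
Qed.

End Encodings.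

Lemma encodes_1addN (N : int) (a : nat) : encodes N a (1 + N) 1.
Proof.
by rewrite /encodes -{1}[N]mul1r expr_1addM_mod_sq; congr (_ %% _)%Z; ring.
Qed.

Lemma encodes_pow_mod_modulus (n a : nat) (w : int) :
  (w ^+ a = 1 %[mod n%:Z])%Z -> encodes n%:Z a (pow_mod w n%:Z (n%:Z ^+ 2)) 0.
Proof.
move=> /eqz_modP[j wa]; apply: encodes_modz.
rewrite /encodes -exprM mulnC exprM wa expr_1addM_mod_sq.
by apply/eqz_modP; exists j; ring.
Qed.

Lemma encodes_fp_enc (n a : nat) (h m : int) (r : nat) : (0 < a)%N ->
  (h ^+ a = 1 %[mod n%:Z])%Z -> encodes n%:Z a (fp_enc n%:Z h m r) m.
Proof.
move=> a_gt0 ha; rewrite /fp_enc; apply: encodes_modz.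
apply: (@encodes_eq_mod _ _ _ _ ((m %% n)%Z * 1 + 0)) => //.
  by rewrite mulr1 addr0 modz_mod.
apply: encodesM; last apply: encodes_pow_mod_modulus.
  exact/(encodes_pow_mod a_gt0)/encodes_1addN.
by rewrite modzXm -exprM mulnC exprM -modzXm ha modzXm expr1n.
Qed.

Lemma fp_dec_encodes (N : int) (alpha : nat) (c m : int) : 1 < N ->
  coprimez (2 * alpha)%N%:Z N -> encodes N (2 * alpha)%N c m ->
  fp_dec N alpha%:Z c = (m %% N)%Z.
Proof.
move=> N_gt1 aN; set a := (2 * alpha)%N in aN *; rewrite /encodes => cm.
have N0 : N != 0 by rewrite gt_eqF // (lt_trans _ N_gt1).
rewrite /fp_dec (_ : 2 * alpha%:Z = a%:Z); last by rewrite /a PoszM.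
rewrite /pow_mod cm.
set r := ((a%:Z * m) %% N)%Z.
have r_ge0 : 0 <= r by rewrite modz_ge0.
have r_ltN : r < N by rewrite -[N]gtr0_norm ?ltz_mod // (lt_trans _ N_gt1).
have -> : ((1 + a%:Z * m * N) %% N ^+ 2)%Z = 1 + r * N.
  rewrite -[RHS](@modz_small _ (N ^+ 2)); last by apply/andP; split; nia.
  apply/eqz_modP; exists ((a%:Z * m) %/ N)%Z.
  by rewrite {1}(divz_eq (a%:Z * m) N) -/r; ring.
rewrite /Lfun addrC addKr mulzK // /r modzMml.
have /eqz_modP[s as1] := mulz_inv_mod aN.
apply/eqz_modP; exists (m * s).
by rewrite mulrAC as1; ring.
Qed.

Lemma ddlog_pow_mod_shares (N : int) (a : nat) (D A s0 s1 : int) :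
  1 < N -> (0 < a)%N -> s1 - s0 = a%:Z -> encodes N a D A ->
  ddlog N (pow_mod D s1 (N ^+ 2)) = ((ddlog N (pow_mod D s0 (N ^+ 2)) + a%:Z * A) %% N)%Z.
Proof.
move=> N_gt1 a_gt0 s10 DA; apply: ddlog_mul_1addM.
- by rewrite gt_eqF // (lt_trans _ N_gt1).
- exact/(encodes_coprime a_gt0)/(encodes_pow_mod a_gt0 s0 DA).
have DN2 : coprimez D (N ^+ 2) by rewrite coprimez_pexpr // (encodes_coprime a_gt0 DA).
rewrite (_ : s1 = s0 + a%:Z); last by rewrite -s10; ring.
by rewrite pow_mod_addn // -modzMmr DA modzMmr.
Qed.

Lemma scmp_hss_encodes (N : int) (a : nat) (s0 s1 c0 c1 cx cy x y r1 r2 : int)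
    (pi : bool) :
  1 < N -> (0 < a)%N -> s1 - s0 = a%:Z ->
  encodes N a c0 0 -> encodes N a c1 1 -> encodes N a cx x -> encodes N a cy y ->
  let v := if pi then y - x else x - y + 1 in
  let mu0 : int := if N < 2 * ((a%:Z * r1 * v + r2) %% N)%Z then 0 else 1 in
  encodes N a (scmp_hss N s0 s1 c0 c1 cx cy r1 r2 pi) (if pi then 1 - mu0 else mu0).
Proof.
move=> N_gt1 a_gt0 s10 enc0 enc1 encx ency v mu0.
set N2 := N ^+ 2.
set D := if ~~ pi then pow_mod (modz (modz (cx * inv_mod cy N2) N2 * c1) N2) r1 N2
         else pow_mod (modz (cy * inv_mod cx N2) N2) r1 N2.
have encD : encodes N a D (r1 * v).
  rewrite /D /v; case: (pi) => /=; apply/(encodes_pow_mod a_gt0)/encodes_modz.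
    exact: encodesM ency (encodes_inv_mod a_gt0 encx).
  exact/(encodesM _ enc1)/encodes_modz/(encodesM encx (encodes_inv_mod a_gt0 ency)).
have d_eq : ((ddlog N (pow_mod D s1 N2) - (ddlog N (pow_mod D s0 N2) - r2)) %% N
             = (a%:Z * r1 * v + r2) %% N)%Z.
  rewrite (ddlog_pow_mod_shares N_gt1 a_gt0 s10 encD) modzDml mulrA.
  by congr (_ %% _)%Z; ring.
have enc_mu0 : encodes N a (if N < 2 * ((ddlog N (pow_mod D s1 N2)
                  - (ddlog N (pow_mod D s0 N2) - r2)) %% N)%Z then c0 else c1) mu0.
  by rewrite d_eq /mu0; case: ifP.
rewrite /scmp_hss -/D -[X in encodes _ _ _ X]addr0; apply/encodes_modz/encodesM => //.
case: (pi) enc_mu0 => //= enc_mu0.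
by apply/encodes_modz/encodesM => //; exact: (encodes_inv_mod a_gt0).
Qed.

(* [P v + r2] stays in [0, N); since [r2 <= N/2 < r1 + r2 <= P + r2], it
   exceeds [N/2] exactly when [v >= 1]. *)
Lemma half_lt_modz_sign (N P r1 r2 B v : int) :
  0 < r1 <= P -> 2 * r2 <= N -> N < 2 * (r1 + r2) -> 2 * (P * B + P) < N ->
  - B <= v <= B + 1 -> (N < 2 * ((P * v + r2) %% N)%Z) = (0 < v).
Proof.
move=> /andP[r1_gt0 r1P] r2N r12N PBN /andP[vB Bv].
have PN : 0 <= P * v + r2 < N by apply/andP; split; nia.
rewrite modz_small //; apply/idP/idP => ?; nia.
Qed.

Lemma exp_lt_of_param_bound (M Y e f : nat) : (e <= f)%N ->
  2 * ((2 ^ f)%N%:Z + Y%:Z) < M%:Z -> (2 ^ e < M)%N.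
Proof.
move=> ef HM; apply: leq_ltn_trans (_ : 2 ^ f < M)%N; first by rewrite leq_exp2l.
move: HM; move: (2 ^ f)%N => X; lia.
Qed.

Lemma ltn_factor_of_size (p P Q m k : nat) :
  (p < 2 ^ k)%N -> (2 ^ m.-1 <= Q)%N -> (P < 2 ^ m)%N -> (Q < 2 ^ m)%N ->
  (2 ^ (2 * k) < P * Q)%N -> (p < Q)%N.
Proof.
move=> pk Qm Pm Qm' kPQ; rewrite ltnNge; apply/negP => Qp.
have mk : (m <= k)%N.
  have : (2 ^ m.-1 < 2 ^ k)%N by lia.
  by rewrite ltn_exp2l //; lia.
have : (P * Q < 2 ^ (2 * k))%N.
  apply: (leq_trans (ltn_mul Pm Qm')).
  by rewrite -expnD leq_exp2l //; lia.
lia.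
Qed.

Lemma ltn_of_dvdn_pred (d n : nat) : (1 < n)%N -> (d %| n.-1)%N -> (d < n)%N.
Proof.
move=> n_gt1 dn; have /dvdn_leq/(_ dn) : (0 < n.-1)%N by lia.
lia.
Qed.

Lemma coprime_2prod_primes (P Q p q : nat) : prime P -> prime Q -> prime p -> prime q ->
  odd P -> odd Q -> (p < P)%N -> (p < Q)%N -> (q < P)%N -> (q < Q)%N ->
  coprime (2 * (p * q)) (P * Q).
Proof.
move=> pP pQ pp pq oP oQ pP' pQ' qP qQ.
have cop (r R : nat) : prime r -> prime R -> (r < R)%N -> coprime r R.
  by move=> pr pR rR; rewrite prime_coprime // dvdn_prime2 // ltn_eqF.
by rewrite !coprimeMl !coprimeMr !coprime2n oP oQ !cop.
Qed.

Lemma fastpai_totient (P Q p q : nat) : prime P -> prime Q -> prime p ->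
  odd P -> odd Q -> odd p -> odd q -> (p %| P.-1)%N -> (q %| Q.-1)%N ->
  gcdn P.-1 Q.-1 = 2%N ->
  (2 * (P.-1 * Q.-1 %/ (4 * p * q)) * (2 * (p * q)) = totient (P * Q))%N.
Proof.
move=> pP pQ pp oP oQ op oq pP1 qQ1 gPQ.
have P1_gt0 : (0 < P.-1)%N by have := prime_gt1 pP; lia.
have PQ : P != Q.
  apply/eqP => ePQ; rewrite -ePQ gcdnn in gPQ.
  by have := dvdn_leq P1_gt0 pP1; have := prime_gt1 pp; rewrite gPQ; lia.
have cPQ : coprime P Q by rewrite prime_coprime // dvdn_prime2.
rewrite totient_coprime // !totient_prime //.
have p2P1 : (2 * p %| P.-1)%N by rewrite Gauss_dvd ?coprime2n // pP1 andbT; lia.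
have q2Q1 : (2 * q %| Q.-1)%N by rewrite Gauss_dvd ?coprime2n // qQ1 andbT; lia.
have := dvdn_mul p2P1 q2Q1; rewrite (_ : (2 * p * (2 * q) = 4 * p * q)%N); last by ring.
by move/divnK => E; rewrite -[in RHS]E; ring.
Qed.

(* [h^(2 alpha) = y0^(4 alpha beta) = y0^phi(N) = 1 (mod N)] by Euler's theorem. *)
Lemma fastpai_h_order (n b al : nat) (y0 : int) : 0 <= y0 -> coprimez y0 n%:Z ->
  (b * (2 * al) = totient n)%N ->
  ((((- y0 ^+ b) %% n%:Z)%Z) ^+ (2 * al) = 1 %[mod n%:Z])%Z.
Proof.
case: y0 => [y|//] _ cy E.
rewrite modzXm exprM sqrrN -exprM -exprM E -[y%:Z]natz -natrX natz !modz_nat.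
by rewrite Euler_exp_totient.
Qed.

Lemma leq_double_mul_exp (p q k : nat) : (p < 2 ^ k)%N -> (q < 2 ^ k)%N ->
  (2 * (p * q) <= 2 ^ (2 * k + 1))%N.
Proof.
move=> pk qk; rewrite addn1 expnS leq_pmul2l // mul2n -addnn expnD.
exact: leq_mul (ltnW pk) (ltnW qk).
Qed.

Lemma noise_bound (N r1 : int) (a l sigma k : nat) :
  (a <= 2 ^ (k + 1))%N -> 1 <= r1 <= (2 ^ sigma)%N%:Z - 1 ->
  2 * ((2 ^ (l + 1 + sigma + k + 1))%N%:Z + (2 ^ (sigma + k + 1))%N%:Z) < N ->
  2 * (a%:Z * r1 * (2 * (2 ^ l)%N%:Z) + a%:Z * r1) < N.
Proof.
rewrite !expnD !expn1 !PoszM; move: (2 ^ l)%N (2 ^ sigma)%N (2 ^ k)%N => L S K.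
move=> aK /andP[r1_ge1 r1S] HN.
have ar1 : a%:Z * r1 <= S%:Z * (K%:Z * 2) by nia.
nia.
Qed.

Lemma scmp_hss_plaintext (N a r1 r2 L x y : int) (pi : bool) :
  0 < a -> 0 < r1 -> 2 * r2 <= N -> N < 2 * (r1 + r2) ->
  2 * (a * r1 * (2 * L) + a * r1) < N -> - L <= x <= L -> - L <= y <= L ->
  let v := if pi then y - x else x - y + 1 in
  let mu0 : int := if N < 2 * ((a * r1 * v + r2) %% N)%Z then 0 else 1 in
  ((if pi then 1 - mu0 else mu0) %% N)%Z = if y <= x then 0 else 1.
Proof.
move=> a_gt0 r1_gt0 r2N r12N HN /andP[x_lo x_hi] /andP[y_lo y_hi] v mu0.
have N_gt1 : 1 < N by nia.
have mod1 : (1 %% N)%Z = 1 by rewrite modz_small // N_gt1.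
rewrite /mu0 (@half_lt_modz_sign N (a * r1) r1 r2 (2 * L)) //; first last.
- by rewrite /v; case: (pi); apply/andP; split; lia.
- by apply/andP; split; nia.
rewrite /v; case: (pi).
  by rewrite subr_gt0 ltNge; case: (y <= x); rewrite ?subrr ?subr0 ?mod0z ?mod1.
by rewrite ltzD1 subr_ge0; case: (y <= x); rewrite ?mod0z ?mod1.
Qed.

Theorem theorem2
  (kappa nk l sigma : nat) (P Q p q : nat) (y0 : int)
  (s0 s1 : int) (x y : int) (rx ry ra rb : nat) (r1 r2 : int) (pi : bool) :
  let lk := (4 * kappa)%N in
  (* key generation *)
  prime P -> prime Q -> (2 ^ (nk./2).-1 <= P < 2 ^ (nk./2))%N ->
  (2 ^ (nk./2).-1 <= Q < 2 ^ (nk./2))%N ->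
  prime p -> prime q -> odd p -> odd q ->
  (2 ^ (lk./2).-1 <= p < 2 ^ (lk./2))%N -> (2 ^ (lk./2).-1 <= q < 2 ^ (lk./2))%N ->
  (p %| P.-1)%N -> (q %| Q.-1)%N ->
  (P %% 4 = 3)%N -> (Q %% 4 = 3)%N ->
  gcdn P.-1 Q.-1 = 2%N ->
  let alpha := (p * q)%N in
  let beta := (P.-1 * Q.-1 %/ (4 * p * q))%N in
  coprime alpha beta ->
  let N : int := (P * Q)%N%:Z in
  (0 <= y0 < N) -> coprimez y0 N ->
  let h : int := ((- y0 ^+ (2 * beta)) %% N)%Z in
  (* standing parameter assumption: N/2 > 2^(l+1+sigma+lk+1) + 2^(sigma+lk+1) *)
  2 * ((2 ^ (l + 1 + sigma + lk + 1))%N%:Z + (2 ^ (sigma + lk + 1))%N%:Z) < N ->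
  (* shares of 2 alpha *)
  s1 - s0 = 2 * alpha%:Z ->
  (* encryption randomness in {0,1}^lk *)
  (rx < 2 ^ lk)%N -> (ry < 2 ^ lk)%N -> (ra < 2 ^ lk)%N -> (rb < 2 ^ lk)%N ->
  (* inputs *)
  - (2 ^ l)%N%:Z <= x <= (2 ^ l)%N%:Z ->
  - (2 ^ l)%N%:Z <= y <= (2 ^ l)%N%:Z ->
  (* S_0's random choices *)
  1 <= r1 <= (2 ^ sigma)%N%:Z - 1 ->
  2 * r2 <= N -> N < 2 * (r1 + r2) ->
  fp_dec N alpha%:Z
    (scmp_hss N s0 s1 (fp_enc N h 0 ra) (fp_enc N h 1 rb)
       (fp_enc N h x rx) (fp_enc N h y ry) r1 r2 pi)
  = (if y <= x then 0 else 1).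
Proof.
move=> lk pP pQ /andP[P_lo P_hi] /andP[Q_lo Q_hi] pp pq op oq /andP[_ p_hi] /andP[_ q_hi]
  pP1 qQ1 P4 Q4 gPQ alpha beta _ N /andP[y0_ge0 _] cy0 h HN s10 _ _ _ _
  hx hy hr1 r2N r12N.
have lk_half : lk./2 = (2 * kappa)%N by rewrite /lk (_ : 4 = 2 * 2)%N // -mulnA mul2n doubleK.
rewrite lk_half in p_hi q_hi.
have PQ_big : (2 ^ (2 * (2 * kappa)) < P * Q)%N.
  by apply: exp_lt_of_param_bound HN; rewrite mulnA -/lk addnAC addn1 addnC leq_addr.
have pltQ := ltn_factor_of_size p_hi Q_lo P_hi Q_hi PQ_big.
have qltP : (q < P)%N.
  by apply: (ltn_factor_of_size q_hi P_lo Q_hi P_hi); rewrite [(Q * P)%N]mulnC.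
have [oP oQ] : odd P /\ odd Q by rewrite -(@odd_mod P 4) // -(@odd_mod Q 4) // P4 Q4.
set a := (2 * alpha)%N.
have a_gt0 : (0 < a)%N by rewrite /a /alpha !muln_gt0 !prime_gt0.
have N_gt1 : 1 < N by rewrite ltz_nat (leq_trans _ (leq_mul (prime_gt1 pP) (prime_gt1 pQ))).
have h_a : (h ^+ a = 1 %[mod N])%Z by exact/fastpai_h_order/fastpai_totient.
have a_N : coprimez a%:Z N.
  by apply: coprime_2prod_primes => //; apply: ltn_of_dvdn_pred; rewrite ?prime_gt1.
have enc m r := encodes_fp_enc m r a_gt0 h_a.
have s1_s0 : s1 - s0 = a%:Z by rewrite s10 PoszM.
have := scmp_hss_encodes r1 r2 pi N_gt1 a_gt0 s1_s0
  (enc 0 ra) (enc 1 rb) (enc x rx) (enc y ry).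
move=> /(fp_dec_encodes N_gt1 a_N) ->.
apply: scmp_hss_plaintext hx hy => //; first by case/andP: hr1.
apply: noise_bound hr1 HN.
rewrite (_ : lk = 2 * (2 * kappa))%N; last by rewrite /lk mulnA.
exact: leq_double_mul_exp.
Qed.
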